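(* Let $\mathcal{U}=\{u_1,\ldots,u_M\}\subset\mathbb{R}\setminus\{0\}$ and $k\ge1$. For $i\in\{1,\ldots,k\}$ let $f_i:\mathbb{R}\to[0,\infty)$ satisfy $f_i(0)\le\sum_{m=1}^Mf_i(u_m)$. Then for integers $0\le w<w'\le k$, $$\sum_{x\in\mathcal{X}_w^k(\mathcal{U})}\prod_{i=1}^kf_i(x_i)\le\big\lceil L^k_{w,w'}\big\rceil\sum_{x'\in\mathcal{X}_{w'}^k(\mathcal{U})}\prod_{i=1}^kf_i(x'_i),\qquad L^k_{w,w'}=\prod_{i=0}^{w'-w-1}\frac{w'-i}{k-w-i}.$$
   Context: $\mathcal{X}_s^k(\mathcal{U})$ is the set of vectors in $\mathbb{R}^k$ with exactly $s$ nonzero entries, each belonging to $\mathcal{U}$. *)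

From HB Require Import structures.
From mathcomp Require Import all_boot all_order all_algebra.
Set Implicit Arguments. Unset Strict Implicit. Unset Printing Implicit Defensive.
Import Order.TTheory GRing.Theory Num.Theory.
Local Open Scope ring_scope.

Definition inX (R : numDomainType) (u : seq R) (k s : nat) (x : 'rV[R]_k) : bool :=
  (#|[set i : 'I_k | x 0 i != 0]| == s) &&
  [forall i : 'I_k, (x 0 i != 0) ==> (x 0 i \in u)].

(* Every vector of X_s^k(U) has entries in 0 :: u, so X_s^k(U) is the finite
   set obtained by filtering all such vectors by inX (duplicates removed). *)
Definition vec_of (R : numDomainType) (u : seq R) (k : nat)
  (g : {ffun 'I_k -> 'I_(size u).+1}) : 'rV[R]_k :=
  \row_(i < k) nth 0 (0 :: u) (g i).

Definition Xset (R : numDomainType) (u : seq R) (k s : nat) : seq 'rV[R]_k :=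
  undup [seq x <- map (@vec_of R u k) (enum {ffun 'I_k -> 'I_(size u).+1}) | inX u s x].

Definition Lkw (R : numFieldType) (k w w' : nat) : R :=
  \prod_(i < w' - w) ((w' - i)%:R / (k - w - i)%:R).

From HB Require Import structures.
From mathcomp Require Import all_boot all_order all_algebra.
From mathcomp Require Import zify.
Set Implicit Arguments. Unset Strict Implicit. Unset Printing Implicit Defensive.
Import Order.TTheory GRing.Theory Num.Theory.
Local Open Scope ring_scope.

(* Grouping the vectors of X_s^k(U) by their support T, the terms with support T
   sum to split_prod a b T = prod_{i in T} b_i * prod_{i notin T} a_i, where
   a_i = f_i(0) <= b_i = sum_m f_i(u_m); this is monotone in T.  Let S_s be its
   sum over |T| = s.  Counting the pairs T <= T' with |T| = w, |T'| = w' in two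
   ways gives C(k-w, w'-w) S_w <= C(w', w) S_w', and C(w', w) / C(k-w, w'-w) is
   exactly L^k_{w,w'}. *)


Section LayerDoubleCounting.
Variable I : finType.

Lemma cards_supersets (A : {set I}) n : (#|A| <= n <= #|I|)%N ->
  #|[set B : {set I} | A \subset B & #|B| == n]| = 'C(#|I| - #|A|, n - #|A|).
Proof.
case/andP=> le_An le_nI.
have -> : [set B : {set I} | A \subset B & #|B| == n] =
          @setC I @^-1: [set C : {set I} | C \subset ~: A & #|C| == (#|I| - n)%N].
  apply/setP => B; rewrite !inE setCS.
  have cardB := cardsC B; congr (_ && _); apply/eqP/eqP; lia.
rewrite card_preimset; last exact: setC_inj.
rewrite cards_draws -bin_sub; last by have := cardsC A; lia.
have cardA := cardsC A; congr 'C(_, _); lia.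
Qed.

Variables (R : numDomainType) (F : {set I} -> R).
Hypothesis F_mono : {homo F : A B / A \subset B >-> A <= B}.

Lemma double_count_layers w w' : (w <= w' <= #|I|)%N ->
  'C(#|I| - w, w' - w)%:R * \sum_(A : {set I} | #|A| == w) F A
    <= 'C(w', w)%:R * \sum_(B : {set I} | #|B| == w') F B.
Proof.
case/andP=> le_ww' le_w'I; rewrite !mulr_sumr.
have -> : \sum_(A : {set I} | #|A| == w) 'C(#|I| - w, w' - w)%:R * F A =
    \sum_(A : {set I} | #|A| == w) \sum_(B in [set C : {set I} | A \subset C & #|C| == w']) F A.
  apply: eq_bigr => A /eqP cardA.
  by rewrite sumr_const cards_supersets cardA ?le_ww' // mulr_natl.
have -> : \sum_(B : {set I} | #|B| == w') 'C(w', w)%:R * F B =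
    \sum_(B : {set I} | #|B| == w') \sum_(A in [set C : {set I} | C \subset B & #|C| == w]) F B.
  apply: eq_bigr => B /eqP cardB.
  by rewrite sumr_const cards_draws cardB mulr_natl.
rewrite (exchange_big_dep (fun B : {set I} => #|B| == w')) /=; last first.
  by move=> A B _; rewrite inE => /andP[].
apply: ler_sum => B /eqP cardB; rewrite [leRHS]big_mkcond [leLHS]big_mkcond.
apply: ler_sum => A _; rewrite !inE cardB eqxx andbT andbC.
by case: ifP => [/andP[sAB _]|_] //; apply: F_mono.
Qed.

End LayerDoubleCounting.

Definition split_prod {R : comPzSemiRingType} {I : finType} (a b : I -> R) (A : {set I}) : R :=
  \prod_(i : I) (if i \in A then b i else a i).

Section SplitProd.
Variables (R : numDomainType) (I : finType) (a b : I -> R).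
Hypotheses (a_ge0 : forall i, 0 <= a i) (le_ab : forall i, a i <= b i).

Lemma split_prod_ge0 (A : {set I}) : 0 <= split_prod a b A.
Proof.
apply: prodr_ge0 => i _; case: (i \in A) => //.
exact: le_trans (a_ge0 i) (le_ab i).
Qed.

Lemma split_prod_mono : {homo split_prod a b : A B / A \subset B >-> A <= B}.
Proof.
move=> A B sAB; apply: ler_prod => i _.
have b_ge0 := le_trans (a_ge0 i) (le_ab i).
case: ifP => [iA|_]; first by rewrite (subsetP sAB i iA) b_ge0 lexx.
by case: ifP; rewrite a_ge0 ?le_ab ?lexx.
Qed.

End SplitProd.

Lemma sum_ffun_support (R : comPzSemiRingType) (I : finType) n
    (h : I -> 'I_n.+1 -> R) (A : {set I}) :
  \sum_(g : {ffun I -> 'I_n.+1} | [set i | g i != ord0] == A) \prod_i h i (g i) =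
  split_prod (fun i => h i ord0) (fun i => \sum_(j | j != ord0) h i j) A.
Proof.
have -> : split_prod (fun i => h i ord0) (fun i => \sum_(j | j != ord0) h i j) A =
          \prod_i \sum_(j | (j != ord0) == (i \in A)) h i j.
  apply: eq_bigr => i _; case: (i \in A); first by apply: eq_bigl => j; rewrite eqb_id.
  by rewrite (big_pred1 ord0) // => j; rewrite eqbF_neg negbK.
rewrite bigA_distr_big_dep; apply: eq_bigl => g.
apply/eqP/familyP => [<- i | supp_g]; first by rewrite unfold_in /= inE.
by apply/setP => i; have := supp_g i; rewrite unfold_in inE => /eqP.
Qed.

Section ExpandXset.
Variables (R : numDomainType) (u : seq R) (k : nat).
Hypotheses (u_uniq : uniq u) (u_nz : 0 \notin u).

Lemma nth_cons0_eq0 (j : 'I_(size u).+1) : (nth 0 (0 :: u) j == 0) = (j == ord0).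
Proof.
case: j => [[|j] lt_j] //=; first by rewrite eqxx.
have u_j := mem_nth 0 (lt_j : (j < size u)%N).
by apply/negbTE; apply: contraNneq u_nz => <-.
Qed.

Lemma vec_of_inj : injective (@vec_of R u k).
Proof.
move=> g1 g2 /rowP eq_g; apply/ffunP => i; apply/val_inj/eqP.
by have /eqP := eq_g i; rewrite !mxE nth_uniq //= u_nz.
Qed.

Lemma inX_vec_of s (g : {ffun 'I_k -> 'I_(size u).+1}) :
  inX u s (vec_of g) = (#|[set i | g i != ord0]| == s).
Proof.
rewrite /inX; have -> : [forall i, (vec_of g 0 i != 0) ==> (vec_of g 0 i \in u)].
  apply/forallP => i; rewrite mxE; apply/implyP.
  by case: (g i) => [[|j] lt_j] //=; rewrite ?eqxx // => _; apply: mem_nth.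
by rewrite andbT; congr (_ == _); apply: eq_card => i; rewrite !inE mxE nth_cons0_eq0.
Qed.

Lemma sum_Xset s (F : 'rV[R]_k -> R) :
  \sum_(x <- Xset u k s) F x =
  \sum_(g : {ffun 'I_k -> 'I_(size u).+1} | #|[set i | g i != ord0]| == s) F (vec_of g).
Proof.
rewrite /Xset filter_map undup_id; last first.
  by rewrite (map_inj_uniq vec_of_inj) filter_uniq // enum_uniq.
rewrite big_map big_filter big_enum_cond /=.
by apply: eq_bigl => g; rewrite inX_vec_of.
Qed.

Lemma sum_Xset_prod (f : 'I_k -> R -> R) s :
  \sum_(x <- Xset u k s) \prod_(i < k) f i (x 0 i) =
  \sum_(A : {set 'I_k} | #|A| == s)
     split_prod (fun i => f i 0) (fun i => \sum_(m <- u) f i m) A.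
Proof.
pose supp (g : {ffun 'I_k -> 'I_(size u).+1}) := [set i | g i != ord0].
rewrite sum_Xset (partition_big supp (fun A => #|A| == s)) //.
apply: eq_bigr => A /eqP cardA.
rewrite (eq_bigl (fun g => supp g == A)); last first.
  by move=> g; apply: andb_idl => /eqP supp_gA; rewrite -cardA -supp_gA.
under eq_bigr => g _ do under eq_bigr => i _ do rewrite mxE.
rewrite (sum_ffun_support (fun i j => f i (nth 0 (0 :: u) j))).
apply: eq_bigr => i _; case: (i \in A) => //.
by rewrite big_mkcond big_ord_recl /= add0r (big_nth 0) big_mkord.
Qed.

End ExpandXset.

Lemma Lkw_binomial (R : numFieldType) k w w' : (w <= w' <= k)%N ->
  Lkw R k w w' = 'C(w', w)%:R / 'C(k - w, w' - w)%:R.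
Proof.
case/andP=> le_ww' le_w'k.
rewrite /Lkw prodf_div -!natr_prod -!ffact_prod -!bin_ffact !natrM bin_sub //.
have Cnz : ('C(k - w, w' - w)%:R : R) != 0 by rewrite pnatr_eq0 -lt0n bin_gt0; lia.
have fact_nz : ((w' - w)`!%:R : R) != 0 by rewrite pnatr_eq0 -lt0n fact_gt0.
by rewrite invfM mulrACA divff // mulr1.
Qed.

Theorem lemma8 (R : archiRealFieldType) (u : seq R) (k : nat)
  (f : 'I_k -> R -> R) (w w' : nat) :
  uniq u -> 0 \notin u -> (1 <= k)%N ->
  (forall i x, 0 <= f i x) ->
  (forall i, f i 0 <= \sum_(m <- u) f i m) ->
  (w < w')%N -> (w' <= k)%N ->
  \sum_(x <- Xset u k w) \prod_(i < k) f i (x 0 i)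
    <= (Num.ceil (Lkw R k w w'))%:~R * \sum_(x <- Xset u k w') \prod_(i < k) f i (x 0 i).
Proof.
move=> u_uniq u_nz _ f_ge0 f0_le lt_ww' le_w'k.
rewrite !sum_Xset_prod //.
set a := fun i => f i 0; set b := fun i => \sum_(m <- u) f i m.
have a_ge0 i : 0 <= a i by apply: f_ge0.
have le_ab i : a i <= b i by apply: f0_le.
have le_ww'k : (w <= w' <= #|'I_k|)%N by rewrite card_ord (ltnW lt_ww') le_w'k.
have := double_count_layers (split_prod_mono a_ge0 le_ab) le_ww'k; rewrite card_ord.
set S := \sum_(A | _) _; set S' := \sum_(B | _) _ => double_count.
have S'_ge0 : 0 <= S' by apply: sumr_ge0 => B _; apply: split_prod_ge0.
have C_gt0 : (0 : R) < 'C(k - w, w' - w)%:R by rewrite ltr0n bin_gt0; lia.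
apply: (@le_trans _ _ (Lkw R k w w' * S')); last by rewrite ler_wpM2r // ceil_ge.
by rewrite Lkw_binomial ?(ltnW lt_ww') // mulrAC ler_pdivlMr // mulrC.
Qed.
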